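(* Let $G$ be the final graph produced by the uncoordinated construction (described in the context) on a finite point set $P\subset\mathbb{R}^d$ with parameter $s>1$. Then: (1) For any two distinct points $p,q\in P$ such that $pq$ is not an edge of $G$, there is an edge $p'q'$ of $G$ with $|pp'|\le |p'q'|/(2s+2)$ and $|qq'|\le |p'q'|/(2s+2)$. (2) For any two distinct edges $pq$ and $p'q'$ of $G$ such that $pq$ was built before $p'q'$, either $|pp'|>|pq|/(2s+2)$ or $|qq'|>|pq|/(2s+2)$.
   Context: Fix $d\ge 1$. Let $P\subset\mathbb{R}^d$ be a finite set of $n\ge 2$ points, $|xy|$ the Euclidean distance, and $s>1$ a parameter. Uncoordinated construction: start with the graph $G$ on vertex set $P$ with no edges (edges are undirected straight segments). Every ordered pair $(p,q)$ of distinct points of $P$ is processed exactly once, in a completely arbitrary order, and no two pairs are processed simultaneously. When $(p,q)$ is processed (by agent $p$), the edge $pq$ is added to $G$ unless $G$ currently contains an edge whose endpoints can be labeled $p',q'$ so that $|pp'|\le |p'q'|/(2s+2)$ and $|qq'|\le |p'q'|/(2s+2)$; in that case $pq$ is not built. The final graph $G$ is the graph after all ordered pairs have been processed. *)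

(* Points of R^d are row vectors 'rV[R]_d over a real closed field R. *)
From HB Require Import structures.
From mathcomp Require Import all_boot all_order all_algebra.
Set Implicit Arguments. Unset Strict Implicit. Unset Printing Implicit Defensive.
Import Order.TTheory GRing.Theory Num.Theory.
Local Open Scope ring_scope.

Section Construction.
Variables (R : rcfType) (d : nat).
Notation pt := 'rV[R]_d.

Definition edist (x y : pt) : R := Num.sqrt (\sum_(i < d) (x 0 i - y 0 i) ^+ 2).

(* the labeled edge a b (p' := a, q' := b) satisfies
   |p a| <= |a b|/(2s+2) and |q b| <= |a b|/(2s+2) *)
Definition close (s : R) (p q a b : pt) : bool :=
  (edist p a <= edist a b / (2 * s + 2)) && (edist q b <= edist a b / (2 * s + 2)).

Definition blocked (s : R) (G : seq (pt * pt)) (p q : pt) : bool :=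
  has (fun e => close s p q e.1 e.2 || close s p q e.2 e.1) G.

Definition step (s : R) (G : seq (pt * pt)) (pq : pt * pt) : seq (pt * pt) :=
  if blocked s G pq.1 pq.2 then G else rcons G pq.

(* final graph: list of edges (undirected, stored as the processed ordered
   pair), in the order they were built *)
Definition build (s : R) (order : seq (pt * pt)) : seq (pt * pt) :=
  foldl (step s) [::] order.

Definition ordered_pairs (P : seq pt) : seq (pt * pt) :=
  filter (fun e => e.1 != e.2) [seq (x, y) | x <- P, y <- P].

Definition is_edge (G : seq (pt * pt)) (x y : pt) : Prop :=
  (x, y) \in G \/ (y, x) \in G.

Definition edge_at (G : seq (pt * pt)) (i : nat) (x y : pt) : Prop :=
  (i < size G)%N /\ (nth (x, y) G i = (x, y) \/ nth (x, y) G i = (y, x)).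

End Construction.

From HB Require Import structures.
From mathcomp Require Import all_boot all_order all_algebra.
Import Order.TTheory GRing.Theory Num.Theory.
Set Implicit Arguments. Unset Strict Implicit. Unset Printing Implicit Defensive.
Local Open Scope ring_scope.

(* The construction only ever appends edges, so a pair that was blocked when it
   was processed stays blocked in the final graph: this gives (1).  Conversely,
   an edge is appended only if no earlier edge blocks it, and an earlier edge
   p q blocks p' q' exactly when |pp'| and |qq'| are both at most
   |pq|/(2s+2): this gives (2). *)

Section Construction.
Variables (R : rcfType) (d : nat) (s : R).
Notation pt := 'rV[R]_d.
Implicit Types (p q a b : pt) (G l : seq (pt * pt)).

Lemma edistC (x y : pt) : edist x y = edist y x.
Proof. by rewrite /edist; congr Num.sqrt; apply: eq_bigr => i _; rewrite -sqrrN opprB. Qed.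

Lemma closeC p q a b : close s p q a b = close s q p b a.
Proof. by rewrite /close andbC (edistC a b). Qed.

Lemma blockedC G p q : blocked s G p q = blocked s G q p.
Proof. by apply: eq_has => e; rewrite orbC !(closeC p q). Qed.

Lemma blocked_cat G t p q : blocked s G p q -> blocked s (G ++ t) p q.
Proof. by rewrite /blocked has_cat => ->. Qed.

Lemma blockedP G p q :
  reflect (exists a b, is_edge G a b /\ close s p q a b) (blocked s G p q).
Proof.
apply: (iffP hasP).
  case=> [[a b] eG /orP [cl | cl]].
    by exists a, b; split; first left.
  by exists b, a; split; first right.
case=> a [b [[eG | eG] cl]].
  by exists (a, b) => //=; rewrite cl.
by exists (b, a) => //=; rewrite cl orbT.
Qed.

Lemma foldl_step_prefix G l : exists t, foldl (step s) G l = G ++ t.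
Proof.
elim: l G => [|x l IH] G /=; first by exists [::]; rewrite cats0.
have [t ->] := IH (step s G x).
rewrite /step; case: blocked; first by exists t.
by exists (x :: t); rewrite -cats1 -catA.
Qed.

Lemma foldl_step_processed G l x : x \in l ->
  x \in foldl (step s) G l \/ blocked s (foldl (step s) G l) x.1 x.2.
Proof.
elim: l G => [//|y l IH] G /=; rewrite in_cons => /orP [/eqP <-|/IH //].
have [t ->] := foldl_step_prefix (step s G x) l.
rewrite /step; case: ifP => Hb; first by right; apply: blocked_cat.
by left; rewrite mem_cat mem_rcons mem_head.
Qed.

Definition built_unblocked G :=
  forall j x0, (j < size G)%N ->
    ~~ blocked s (take j G) (nth x0 G j).1 (nth x0 G j).2.

Lemma foldl_step_unblocked G l :
  built_unblocked G -> built_unblocked (foldl (step s) G l).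
Proof.
elim: l G => [|x l IH] G //= HG; apply: IH.
rewrite /step; case Hb: blocked => //.
move=> j x0; rewrite size_rcons ltnS leq_eqVlt => /orP [/eqP ->|Hj].
  by rewrite nth_rcons ltnn eqxx -cats1 take_size_cat // Hb.
by rewrite nth_rcons Hj -cats1 takel_cat ?HG // ltnW.
Qed.

Lemma build_unblocked order : built_unblocked (build s order).
Proof. exact: foldl_step_unblocked. Qed.

Lemma edge_at_take G i j p q :
  (i < j)%N -> edge_at G i p q -> is_edge (take j G) p q.
Proof.
move=> ij [iG ei].
have ein : nth (p, q) G i \in take j G.
  by rewrite -(nth_take _ ij); apply: mem_nth; rewrite size_take; case: ifP.
by case: ei => e; rewrite e in ein; [left | right].
Qed.

Lemma build_later_edge_unblocked order i j p q p' q' :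
  (i < j)%N -> edge_at (build s order) i p q -> edge_at (build s order) j p' q' ->
  ~~ close s p' q' p q.
Proof.
move=> ij ei [jG ej]; apply/negP => cl.
have unbl := @build_unblocked order j (p', q') jG.
have bl : blocked s (take j (build s order)) p' q'.
  by apply/blockedP; exists p, q; split; first exact: edge_at_take ei.
by case: ej unbl => -> /=; rewrite ?bl // blockedC bl.
Qed.

End Construction.

Theorem lemma1 (R : rcfType) (d : nat) (P : seq 'rV[R]_d) (s : R)
    (order : seq ('rV[R]_d * 'rV[R]_d)) :
  (1 <= d)%N -> uniq P -> (2 <= size P)%N -> 1 < s ->
  perm_eq order (ordered_pairs P) ->
  let G := build s order in
  (forall p q, p \in P -> q \in P -> p != q -> ~ is_edge G p q ->
     exists p' q', is_edge G p' q' /\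
       edist p p' <= edist p' q' / (2 * s + 2) /\
       edist q q' <= edist p' q' / (2 * s + 2)) /\
  (forall (i j : nat) p q p' q', (i < j)%N -> edge_at G i p q -> edge_at G j p' q' ->
     edist p p' > edist p q / (2 * s + 2) \/ edist q q' > edist p q / (2 * s + 2)).
Proof.
move=> _ _ _ _ Hperm G; split.
  move=> p q pP qP pq NE.
  have pq_order : (p, q) \in order.
    by rewrite (perm_mem Hperm) mem_filter pq; apply: allpairs_f.
  case: (foldl_step_processed s [::] pq_order) => [pqG | /blockedP].
    by case: NE; left.
  by case=> a [b [eG /andP [pa qb]]]; exists a, b.
move=> i j p q p' q' ij ei ej.
have := build_later_edge_unblocked ij ei ej.
by rewrite /close negb_and -!ltNge (edistC p') (edistC q') => /orP [] ->; [left | right].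
Qed.
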